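(* Let $\mathcal{X}=\mathcal{Y}=\{0,1\}$ and let $d:\mathcal{X}\times\mathcal{Y}\to\mathbb{R}_{\mathrm{c}}$ be the single-letter distortion measure given by the matrix $d=\begin{bmatrix}0 & d_{0,1}\\ d_{1,0} & 0\end{bmatrix}$ with $d_{0,1}>0$ and $d_{1,0}>0$ computable. Then there exist a sequence of computable input distributions $(P_{X,n})_{n\in\mathbb{N}}$ in $\mathcal{P}_{\mathrm{c}}(\mathcal{X})$ and a computable sequence of distortion levels $(D_n)_{n\in\mathbb{N}}$ such that no function $F_{\mathrm{opt}}$ computing the sequence of optimal transition probabilities $P^{*}_{Y|X,n}\in\mathcal{P}_{\mathrm{opt}}(d,D_n,P_{X,n})$ is Banach–Mazur computable.
   Context: A real number is computable if it is the effective limit of a computable sequence of rationals (with a recursive modulus of convergence); $\mathbb{R}_{\mathrm{c}}$ denotes the computable reals, a sequence of reals (or vectors/matrices) is computable if this can be done uniformly in the index, and $\mathcal{P}_{\mathrm{c}}(\mathcal{X})$ denotes the probability distributions on $\mathcal{X}$ with computable entries. For a source distribution $P_X$, distortion measure $d$ and level $D$, the rate distortion function is $R(D)=\inf\{I(X;Y): P_{Y|X},\ \sum_{x,y}P_X(x)P_{Y|X}(y|x)d(x,y)\leq D\}$ over all test channels $P_{Y|X}$, and $\mathcal{P}_{\mathrm{opt}}(d,D,P_X)$ is the set of test channels attaining the minimum. A function $F_{\mathrm{opt}}$ mapping inputs (source distribution, distortion level) to an optimal test channel is Banach–Mazur computable if it maps every computable sequence of inputs to a computable sequence of outputs. *)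

From Stdlib Require Import Reals List Arith.
Import ListNotations.
Open Scope R_scope.

Inductive rcode : Type :=
| RZero
| RSucc
| RProj (i : nat)
| RComp (f : rcode) (gs : list rcode)
| RPrec (f g : rcode)
| RMu (f : rcode).

Inductive reval : rcode -> list nat -> nat -> Prop :=
| ev_zero args : reval RZero args 0
| ev_succ args : reval RSucc args (S (hd 0%nat args))
| ev_proj i args : reval (RProj i) args (nth i args 0%nat)
| ev_comp f gs args ys v :
    revals gs args ys -> reval f ys v -> reval (RComp f gs) args v
| ev_prec0 f g args v :
    reval f args v -> reval (RPrec f g) (0%nat :: args) v
| ev_precS f g y args r v :
    reval (RPrec f g) (y :: args) r -> reval g (y :: r :: args) v ->
    reval (RPrec f g) (S y :: args) v
| ev_mu f args n :
    reval f (n :: args) 0 ->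
    (forall m, (m < n)%nat -> exists v, reval f (m :: args) (S v)) ->
    reval (RMu f) args n
with revals : list rcode -> list nat -> list nat -> Prop :=
| evs_nil args : revals nil args nil
| evs_cons g gs args y ys :
    reval g args y -> revals gs args ys -> revals (g :: gs) args (y :: ys).

Definition computable2 (f : nat -> nat -> nat) : Prop :=
  exists c : rcode, forall n k, reval c [n; k] (f n k).

Definition rat_of (a b c : nat) : R := (INR a - INR b) / (INR c + 1).

Definition computable_real_seq (x : nat -> R) : Prop :=
  exists a b c e : nat -> nat -> nat,
    computable2 a /\ computable2 b /\ computable2 c /\ computable2 e /\
    forall n N k, (e n N <= k)%nat ->
      Rabs (rat_of (a n k) (b n k) (c n k) - x n) <= / 2 ^ N.

Definition computable_real (x : R) : Prop := computable_real_seq (fun _ => x).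

(** * Binary alphabets X = Y = {0,1} encoded as bool (false = 0, true = 1) *)
Definition is_dist (p : bool -> R) : Prop :=
  0 <= p false /\ 0 <= p true /\ p false + p true = 1.

(** test channel W x y = P_{Y|X}(y|x) *)
Definition is_channel (W : bool -> bool -> R) : Prop :=
  forall x, is_dist (W x).

Definition sum2 (f : bool -> R) : R := f false + f true.

Definition dist_matrix (d01 d10 : R) (x y : bool) : R :=
  match x, y with
  | false, true => d01
  | true, false => d10
  | _, _ => 0
  end.

Definition avg_distortion (d : bool -> bool -> R) (P : bool -> R)
  (W : bool -> bool -> R) : R :=
  sum2 (fun x => sum2 (fun y => P x * W x y * d x y)).

Definition output_dist (P : bool -> R) (W : bool -> bool -> R) (y : bool) : R :=
  sum2 (fun x => P x * W x y).

Definition mutual_info (P : bool -> R) (W : bool -> bool -> R) : R :=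
  sum2 (fun x => sum2 (fun y =>
    if Req_EM_T (P x * W x y) 0 then 0
    else P x * W x y * ln (W x y / output_dist P W y))).

Definition P_opt (d : bool -> bool -> R) (D : R) (P : bool -> R)
  (W : bool -> bool -> R) : Prop :=
  is_channel W /\ avg_distortion d P W <= D /\
  forall W', is_channel W' -> avg_distortion d P W' <= D ->
    mutual_info P W <= mutual_info P W'.

Definition computable_dist_seq (P : nat -> bool -> R) : Prop :=
  computable_real_seq (fun n => P n false) /\
  computable_real_seq (fun n => P n true).

Definition computable_channel_seq (W : nat -> bool -> bool -> R) : Prop :=
  forall x y, computable_real_seq (fun n => W n x y).

Definition BM_computable (F : (bool -> R) -> R -> (bool -> bool -> R)) : Prop :=
  forall (Pn : nat -> bool -> R) (Dn : nat -> R),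
    (forall n, is_dist (Pn n)) -> computable_dist_seq Pn ->
    computable_real_seq Dn ->
    computable_channel_seq (fun n => F (Pn n) (Dn n)).

From Stdlib Require Import Reals List Arith Lia Lra ZArith ClassicalEpsilon.
Import ListNotations.
Open Scope R_scope.

(* Let [delta n] be [0] when the [n]-th partial recursive program diverges on
   input [n], and [-2^-(t+1)] (resp. [+2^-(t+1)]) when a universal machine finds
   it halting after [t] steps with output [0] (resp. a nonzero output).  Running
   the machine for [k] steps gives [delta n] up to [2^-k], so [delta] is a
   computable sequence; but its sign is undecidable, since a program deciding
   it, run on its own code, would contradict itself.
   Take the Bernoulli source [P(1) = p_n] with
   [p_n / (1 - p_n) = d01 (1 + delta n) / d10], and let [D_n] be the smaller of
   the distortions [p_n d10] and [(1 - p_n) d01] of the two constant test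
   channels.  The rate at [D_n] is [0]; a channel carrying no information has
   equal rows, and among those only the constant channel with the cheaper output
   meets [D_n].  Which output is cheaper is the sign of [delta n], so
   [W*_n(0|0)] is [1] or [0] according to that sign, and a computable
   approximation of it to within [1/4] would decide the sign. *)

(** * Cantor pairing and primitive recursive building blocks *)

Section PrimitiveCodes.
Local Open Scope nat_scope.

Fixpoint triangle (n : nat) : nat := match n with 0 => 0 | S m => triangle m + S m end.

Lemma triangle_le : forall a b, a <= b -> triangle a <= triangle b.
Proof. intros a b H; induction H; simpl; lia. Qed.

Definition cpair (x y : nat) : nat := triangle (x + y) + y.

Fixpoint cdiag (z : nat) : nat :=
  match z with
  | 0 => 0
  | S z' => let w := cdiag z' in if S z' <? triangle (S w) then w else S w
  end.

Lemma cdiag_spec : forall z, triangle (cdiag z) <= z < triangle (S (cdiag z)).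
Proof.
  induction z as [|z IH]; [simpl; lia|].
  cbn [cdiag]. destruct (Nat.ltb_spec (S z) (triangle (S (cdiag z)) )) as [H|H].
  - split; [lia|exact H].
  - cbn [triangle] in *. lia.
Qed.

Lemma cdiag_unique : forall z w, triangle w <= z < triangle (S w) -> cdiag z = w.
Proof.
  intros z w Hw. pose proof (cdiag_spec z) as Hc.
  destruct (Nat.lt_trichotomy (cdiag z) w) as [H|[H|H]]; auto.
  - assert (triangle (S (cdiag z)) <= triangle w) by (apply triangle_le; lia). lia.
  - assert (triangle (S w) <= triangle (cdiag z)) by (apply triangle_le; lia). lia.
Qed.

Definition csnd (z : nat) : nat := z - triangle (cdiag z).
Definition cfst (z : nat) : nat := cdiag z - csnd z.

Lemma cdiag_pair : forall x y, cdiag (cpair x y) = x + y.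
Proof. intros; apply cdiag_unique; unfold cpair; simpl; lia. Qed.

Lemma csnd_pair : forall x y, csnd (cpair x y) = y.
Proof. intros; unfold csnd; rewrite cdiag_pair; unfold cpair; lia. Qed.
Lemma cfst_pair : forall x y, cfst (cpair x y) = x.
Proof. intros; unfold cfst; rewrite csnd_pair, cdiag_pair; lia. Qed.

Lemma cpair_surjective : forall z, cpair (cfst z) (csnd z) = z.
Proof.
  intros z. pose proof (cdiag_spec z) as H. simpl in H. unfold cpair, cfst, csnd.
  replace (cdiag z - (z - triangle (cdiag z)) + (z - triangle (cdiag z))) with (cdiag z) by lia. lia.
Qed.

Definition ifz (c a b : nat) : nat := match c with 0 => a | S _ => b end.

Definition const_code (k : nat) : rcode := Nat.iter k (fun c => RComp RSucc [c]) RZero.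
Definition pred_code := RPrec RZero (RProj 0).
Definition add_code := RPrec (RProj 0) (RComp RSucc [RProj 1]).
Definition mul_code := RPrec RZero (RComp add_code [RProj 1; RProj 2]).
Definition rsub_code := RPrec (RProj 0) (RComp pred_code [RProj 1]).
Definition sub_code := RComp rsub_code [RProj 1; RProj 0].
Definition triangle_code := RPrec RZero (RComp add_code [RProj 1; RComp RSucc [RProj 0]]).
Definition pow2_code := RPrec (const_code 1) (RComp add_code [RProj 1; RProj 1]).
Definition ifz_code := RPrec (RProj 0) (RProj 3).
Definition cdiag_test_code := RComp sub_code [RComp RSucc [RProj 1]; RComp triangle_code [RComp RSucc [RProj 0]]].
(* [cdiag z] is the least [m] with [z < triangle (S m)]. *)
Definition cdiag_code := RMu cdiag_test_code.

Lemma revals_one : forall c l y, reval c l y -> revals [c] l [y].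
Proof. intros; constructor; auto; constructor. Qed.
Lemma revals_two : forall c1 c2 l y1 y2, reval c1 l y1 -> reval c2 l y2 -> revals [c1; c2] l [y1; y2].
Proof. intros; constructor; auto; constructor; auto; constructor. Qed.
Lemma revals_three : forall c1 c2 c3 l y1 y2 y3, reval c1 l y1 -> reval c2 l y2 -> reval c3 l y3 ->
  revals [c1; c2; c3] l [y1; y2; y3].
Proof. intros; constructor; auto; constructor; auto; constructor; auto; constructor. Qed.

Lemma reval_const_code : forall k l, reval (const_code k) l k.
Proof. induction k; intros; [constructor | econstructor; [apply revals_one, IHk | constructor]]. Qed.

Lemma reval_pred_code : forall x, reval pred_code [x] (pred x).
Proof. induction x; [repeat constructor | eapply ev_precS; [apply IHx | constructor]]. Qed.

Lemma reval_add_code : forall x y, reval add_code [x; y] (x + y).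
Proof. induction x; intros y; [repeat constructor | eapply ev_precS; [apply IHx | repeat econstructor]]. Qed.

Lemma reval_mul_code : forall x y, reval mul_code [x; y] (x * y).
Proof.
  induction x; intros y; [repeat constructor | eapply ev_precS; [apply IHx | repeat econstructor]].
  simpl. replace (y + x * y) with (x * y + y) by lia. apply reval_add_code.
Qed.

Lemma reval_rsub_code : forall y x, reval rsub_code [y; x] (x - y).
Proof.
  induction y; intros x.
  - rewrite Nat.sub_0_r. repeat constructor.
  - eapply ev_precS; [apply IHy | repeat econstructor].
    simpl. replace (x - S y) with (pred (x - y)) by lia. apply reval_pred_code.
Qed.

Lemma reval_sub_code : forall x y, reval sub_code [x; y] (x - y).
Proof. intros. econstructor; [repeat econstructor | apply reval_rsub_code]. Qed.

Lemma reval_triangle_code : forall n, reval triangle_code [n] (triangle n).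
Proof.
  induction n; [repeat constructor | eapply ev_precS; [apply IHn | repeat econstructor]].
  apply reval_add_code.
Qed.

Lemma reval_pow2_code : forall n, reval pow2_code [n] (2 ^ n).
Proof.
  induction n; [constructor; apply reval_const_code | eapply ev_precS; [apply IHn | repeat econstructor]].
  simpl. rewrite Nat.add_0_r. apply reval_add_code.
Qed.

Lemma reval_ifz_code : forall c a b, reval ifz_code [c; a; b] (ifz c a b).
Proof.
  induction c; intros a b.
  - constructor. constructor.
  - eapply ev_precS. apply IHc. constructor.
Qed.

Lemma reval_cdiag_code : forall z, reval cdiag_code [z] (cdiag z).
Proof.
  intros z. pose proof (cdiag_spec z) as Hs.
  assert (Hf : forall m, reval cdiag_test_code [m; z] (S z - triangle (S m))).
  { intros m. econstructor. apply revals_two.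
    - econstructor; [apply revals_one; constructor | constructor].
    - econstructor; [apply revals_one; econstructor; [apply revals_one; constructor| constructor] | apply reval_triangle_code].
    - simpl. apply reval_sub_code. }
  constructor.
  - replace 0 with (S z - triangle (S (cdiag z))) by lia. apply Hf.
  - intros m Hm. exists (z - triangle (S m)).
    assert (triangle (S m) <= triangle (cdiag z)) by (apply triangle_le; lia).
    replace (S (z - triangle (S m))) with (S z - triangle (S m)) by lia. apply Hf.
Qed.

(* The body of [EIter] sees the current iterate as its only variable;
   [ECall f c] applies an external function [f], and [expr_wf] requires that
   [c] computes it. *)
Inductive expr : Type :=
| EVar (i : nat)
| ECst (k : nat)
| ESucc (e : expr)
| EPred (e : expr)
| EAdd (e1 e2 : expr)
| EMul (e1 e2 : expr)
| ESub (e1 e2 : expr)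
| ETriangle (e : expr)
| ECdiag (e : expr)
| EPow2 (e : expr)
| EIfz (e1 e2 e3 : expr)
| EIter (body count init : expr)
| ECall (f : nat -> nat -> nat) (c : rcode) (e1 e2 : expr).

Fixpoint expr_eval (e : expr) (l : list nat) : nat :=
  match e with
  | EVar i => nth i l 0
  | ECst k => k
  | ESucc e => S (expr_eval e l)
  | EPred e => pred (expr_eval e l)
  | EAdd e1 e2 => expr_eval e1 l + expr_eval e2 l
  | EMul e1 e2 => expr_eval e1 l * expr_eval e2 l
  | ESub e1 e2 => expr_eval e1 l - expr_eval e2 l
  | ETriangle e => triangle (expr_eval e l)
  | ECdiag e => cdiag (expr_eval e l)
  | EPow2 e => 2 ^ expr_eval e l
  | EIfz e1 e2 e3 => ifz (expr_eval e1 l) (expr_eval e2 l) (expr_eval e3 l)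
  | EIter b c i => Nat.iter (expr_eval c l) (fun x => expr_eval b [x]) (expr_eval i l)
  | ECall f _ e1 e2 => f (expr_eval e1 l) (expr_eval e2 l)
  end.

Fixpoint expr_wf (e : expr) : Prop :=
  match e with
  | EVar _ | ECst _ => True
  | ESucc e | EPred e | ETriangle e | ECdiag e | EPow2 e => expr_wf e
  | EAdd e1 e2 | EMul e1 e2 | ESub e1 e2 => expr_wf e1 /\ expr_wf e2
  | EIfz e1 e2 e3 => expr_wf e1 /\ expr_wf e2 /\ expr_wf e3
  | EIter b c i => expr_wf b /\ expr_wf c /\ expr_wf i
  | ECall f c e1 e2 => (forall x y, reval c [x; y] (f x y)) /\ expr_wf e1 /\ expr_wf e2
  end.

Fixpoint expr_code (e : expr) : rcode :=
  match e with
  | EVar i => RProj i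
  | ECst k => const_code k
  | ESucc e => RComp RSucc [expr_code e]
  | EPred e => RComp pred_code [expr_code e]
  | EAdd e1 e2 => RComp add_code [expr_code e1; expr_code e2]
  | EMul e1 e2 => RComp mul_code [expr_code e1; expr_code e2]
  | ESub e1 e2 => RComp sub_code [expr_code e1; expr_code e2]
  | ETriangle e => RComp triangle_code [expr_code e]
  | ECdiag e => RComp cdiag_code [expr_code e]
  | EPow2 e => RComp pow2_code [expr_code e]
  | EIfz e1 e2 e3 => RComp ifz_code [expr_code e1; expr_code e2; expr_code e3]
  | EIter b c i => RComp (RPrec (RProj 0) (RComp (expr_code b) [RProj 1])) [expr_code c; expr_code i]
  | ECall _ c e1 e2 => RComp c [expr_code e1; expr_code e2]
  end.

Lemma reval_expr_code : forall e, expr_wf e -> forall l, reval (expr_code e) l (expr_eval e l).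
Proof.
  induction e; simpl; intros Hw l.
  - constructor.
  - apply reval_const_code.
  - econstructor. apply revals_one, IHe, Hw. constructor.
  - econstructor. apply revals_one, IHe, Hw. apply reval_pred_code.
  - destruct Hw. econstructor. apply revals_two; [apply IHe1|apply IHe2]; auto. apply reval_add_code.
  - destruct Hw. econstructor. apply revals_two; [apply IHe1|apply IHe2]; auto. apply reval_mul_code.
  - destruct Hw. econstructor. apply revals_two; [apply IHe1|apply IHe2]; auto. apply reval_sub_code.
  - econstructor. apply revals_one, IHe, Hw. apply reval_triangle_code.
  - econstructor. apply revals_one, IHe, Hw. apply reval_cdiag_code.
  - econstructor. apply revals_one, IHe, Hw. apply reval_pow2_code.
  - destruct Hw as [? [? ?]]. econstructor. apply revals_three; [apply IHe1|apply IHe2|apply IHe3]; auto.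
    apply reval_ifz_code.
  - destruct Hw as [Hb [Hc Hi]]. econstructor. apply revals_two; [apply IHe2|apply IHe3]; auto.
    generalize (expr_eval e2 l) as n. induction n.
    + constructor. constructor.
    + eapply ev_precS. apply IHn. econstructor. apply revals_one. constructor. simpl. apply IHe1; auto.
  - destruct Hw as [Hf [H1 H2]]. econstructor. apply revals_two; [apply IHe1|apply IHe2]; auto. apply Hf.
Qed.

Lemma computable2_expr : forall e, expr_wf e -> computable2 (fun n k => expr_eval e [n; k]).
Proof. intros e H. exists (expr_code e). intros; apply reval_expr_code; auto. Qed.

End PrimitiveCodes.

Lemma computable2_of_expr : forall E (f : nat -> nat -> nat), expr_wf E ->
  (forall n k, expr_eval E [n; k] = f n k) -> computable2 f.
Proof.
  intros E f W H. destruct (computable2_expr E W) as [c Hc]. exists c. intros n k. rewrite <- H. apply Hc.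
Qed.

Definition ecall f c := ECall f c (EVar 0) (EVar 1).

Lemma computable2_comp : forall f g h, computable2 f -> computable2 g -> computable2 h ->
  computable2 (fun n k => f (g n k) (h n k)).
Proof.
  intros f g h [cf Hf] [cg Hg] [ch Hh].
  apply (computable2_of_expr (ECall f cf (ecall g cg) (ecall h ch))); simpl; auto.
Qed.

Lemma computable2_const : forall m, computable2 (fun _ _ => m).
Proof. intros m; apply (computable2_of_expr (ECst m)); simpl; auto. Qed.
Lemma computable2_fst : computable2 (fun n _ => n).
Proof. apply (computable2_of_expr (EVar 0)); simpl; auto. Qed.
Lemma computable2_snd : computable2 (fun _ k => k).
Proof. apply (computable2_of_expr (EVar 1)); simpl; auto. Qed.
Lemma computable2_add : forall f g, computable2 f -> computable2 g ->
  computable2 (fun n k => f n k + g n k)%nat.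
Proof.
  intros f g Hf Hg. apply (computable2_comp (fun x y => x + y)%nat); auto.
  apply (computable2_of_expr (EAdd (EVar 0) (EVar 1))); simpl; auto.
Qed.
Lemma computable2_mul : forall f g, computable2 f -> computable2 g ->
  computable2 (fun n k => f n k * g n k)%nat.
Proof.
  intros f g Hf Hg. apply (computable2_comp (fun x y => x * y)%nat); auto.
  apply (computable2_of_expr (EMul (EVar 0) (EVar 1))); simpl; auto.
Qed.
Lemma computable2_sub : forall f g, computable2 f -> computable2 g ->
  computable2 (fun n k => f n k - g n k)%nat.
Proof.
  intros f g Hf Hg. apply (computable2_comp (fun x y => x - y)%nat); auto.
  apply (computable2_of_expr (ESub (EVar 0) (EVar 1))); simpl; auto.
Qed.
Lemma computable2_succ : forall f, computable2 f -> computable2 (fun n k => S (f n k)).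
Proof.
  intros f Hf. apply (computable2_comp (fun x _ => S x) f f); auto.
  apply (computable2_of_expr (ESucc (EVar 0))); simpl; auto.
Qed.
Lemma computable2_ifz : forall f g h, computable2 f -> computable2 g -> computable2 h ->
  computable2 (fun n k => ifz (f n k) (g n k) (h n k)).
Proof.
  intros f g h [cf Hf] [cg Hg] [ch Hh].
  apply (computable2_of_expr (EIfz (ecall f cf) (ecall g cg) (ecall h ch))); simpl; auto.
Qed.
Lemma computable2_max : forall f g, computable2 f -> computable2 g ->
  computable2 (fun n k => Nat.max (f n k) (g n k)).
Proof.
  intros f g Hf Hg. apply (computable2_comp Nat.max); auto.
  apply (computable2_of_expr (EAdd (ESub (EVar 0) (EVar 1)) (EVar 1))); simpl; auto.
  intros; lia.
Qed.

Fixpoint call_free (e : expr) : bool :=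
  match e with
  | EVar _ | ECst _ => true
  | ESucc e | EPred e | ETriangle e | ECdiag e | EPow2 e => call_free e
  | EAdd e1 e2 | EMul e1 e2 | ESub e1 e2 => call_free e1 && call_free e2
  | EIfz e1 e2 e3 | EIter e1 e2 e3 => call_free e1 && call_free e2 && call_free e3
  | ECall _ _ _ _ => false
  end.

Lemma call_free_wf : forall e, call_free e = true -> expr_wf e.
Proof.
  induction e; simpl; intros H; repeat rewrite Bool.andb_true_iff in H; try tauto; try discriminate.
Qed.

Lemma computable2_expr_comp : forall E1 E2, expr_wf E1 -> expr_wf E2 ->
  computable2 (fun n k => expr_eval E1 [expr_eval E2 [n; k]]).
Proof.
  intros E1 E2 H1 H2. exists (RComp (expr_code E1) [expr_code E2]). intros n k.
  econstructor. apply revals_one. apply reval_expr_code; auto. apply reval_expr_code; auto.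
Qed.

Ltac solve_computable2 :=
  repeat first [ assumption | apply computable2_fst | apply computable2_snd | apply computable2_const
               | apply computable2_add | apply computable2_mul | apply computable2_sub
               | apply computable2_succ | apply computable2_ifz | apply computable2_max ].

(** * A universal machine *)

Section Machine.
Local Open Scope nat_scope.

Definition lhd n := cfst (pred n).
Definition ltl n := csnd (pred n).
Definition lcons x l := S (cpair x l).
Definition select6 t (a0 a1 a2 a3 a4 a5 : nat) :=
  ifz t a0 (ifz (t-1) a1 (ifz (t-2) a2 (ifz (t-3) a3 (ifz (t-4) a4 a5)))).
Definition frame_eval c a := cpair 0 (cpair c a).
Definition frame_evals gs a := cpair 1 (cpair gs a).
Definition frame_comp f := cpair 2 f.
Definition frame_prec g y r := cpair 3 (cpair g (cpair y r)).
Definition frame_mu f n a := cpair 4 (cpair f (cpair n a)).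
Definition frame_cons := cpair 5 0.
Definition lnth i l := lhd (Nat.iter i ltl l).

Definition encode_list (l : list nat) : nat := fold_right lcons 0 l.

Fixpoint encode_code (c : rcode) : nat :=
  match c with
  | RZero => cpair 0 0
  | RSucc => cpair 1 0
  | RProj i => cpair 2 i
  | RComp f gs => cpair 3 (cpair (encode_code f) (encode_list (map encode_code gs)))
  | RPrec f g => cpair 4 (cpair (encode_code f) (encode_code g))
  | RMu f => cpair 5 (encode_code f)
  end.

(* A state is [cpair K V], with [K] a list of pending frames and [V] a stack
   of computed values.  [frame_eval c a] runs the code [c] (as numbered by
   [encode_code]) on the argument list [a] and pushes the result;
   [frame_evals] does the same for a list of codes and pushes the list of
   results; [frame_comp], [frame_prec], [frame_mu] and [frame_cons] pop values
   from [V] to resume a composition, a primitive recursion step, a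
   minimisation search and a list construction.  The machine has halted when
   [K] is empty. *)
Definition machine_step (s : nat) : nat :=
 let F := cfst s in let V := csnd s in
 let fr := lhd F in let F' := ltl F in
 let tag := cfst fr in let bd := csnd fr in
 ifz F s (select6 tag
   (let c := cfst bd in let a := csnd bd in let ct := cfst c in let cb := csnd c in
      select6 ct
        (cpair F' (lcons 0 V))
        (cpair F' (lcons (S (lhd a)) V))
        (cpair F' (lcons (lnth cb a) V))
        (cpair (lcons (frame_evals (csnd cb) a) (lcons (frame_comp (cfst cb)) F')) V)
        (ifz (lhd a) (cpair (lcons (frame_eval (cfst cb) (ltl a)) F') V)
             (cpair (lcons (frame_eval c (lcons (pred (lhd a)) (ltl a)))
                   (lcons (frame_prec (csnd cb) (pred (lhd a)) (ltl a)) F')) V))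
        (cpair (lcons (frame_eval cb (lcons 0 a)) (lcons (frame_mu cb 0 a) F')) V))
   (let gs := cfst bd in let a := csnd bd in
      ifz gs (cpair F' (lcons 0 V))
        (cpair (lcons (frame_eval (lhd gs) a) (lcons (frame_evals (ltl gs) a) (lcons frame_cons F'))) V))
   (cpair (lcons (frame_eval bd (lhd V)) F') (ltl V))
   (let g := cfst bd in let y := cfst (csnd bd) in let r := csnd (csnd bd) in
      cpair (lcons (frame_eval g (lcons y (lcons (lhd V) r))) F') (ltl V))
   (let f := cfst bd in let n := cfst (csnd bd) in let a := csnd (csnd bd) in
      ifz (lhd V) (cpair F' (lcons n (ltl V)))
        (cpair (lcons (frame_eval f (lcons (S n) a)) (lcons (frame_mu f (S n) a) F')) (ltl V)))
   (cpair F' (lcons (lcons (lhd (ltl V)) (lhd V)) (ltl (ltl V))))).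

(* [machine_step] transcribed into [expr] syntax; the two agree by computation
   (see [expr_eval_xclocked]). *)
Definition xcsnd e := ESub e (ETriangle (ECdiag e)).
Definition xcfst e := ESub (ECdiag e) (xcsnd e).
Definition xcpair x y := EAdd (ETriangle (EAdd x y)) y.
Definition xlhd e := xcfst (EPred e).
Definition xltl e := xcsnd (EPred e).
Definition xlcons x l := ESucc (xcpair x l).
Definition xselect6 t a0 a1 a2 a3 a4 a5 :=
  EIfz t a0 (EIfz (ESub t (ECst 1)) a1 (EIfz (ESub t (ECst 2)) a2
    (EIfz (ESub t (ECst 3)) a3 (EIfz (ESub t (ECst 4)) a4 a5)))).
Definition xframe_eval c a := xcpair (ECst 0) (xcpair c a).
Definition xframe_evals gs a := xcpair (ECst 1) (xcpair gs a).
Definition xframe_comp f := xcpair (ECst 2) f.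
Definition xframe_prec g y r := xcpair (ECst 3) (xcpair g (xcpair y r)).
Definition xframe_mu f n a := xcpair (ECst 4) (xcpair f (xcpair n a)).
Definition xframe_cons := xcpair (ECst 5) (ECst 0).
Definition xlnth i l := xlhd (EIter (xltl (EVar 0)) i l).

Definition xmachine_step (s : expr) : expr :=
 let F := xcfst s in let V := xcsnd s in
 let fr := xlhd F in let F' := xltl F in
 let tag := xcfst fr in let bd := xcsnd fr in
 EIfz F s (xselect6 tag
   (let c := xcfst bd in let a := xcsnd bd in let ct := xcfst c in let cb := xcsnd c in
      xselect6 ct
        (xcpair F' (xlcons (ECst 0) V))
        (xcpair F' (xlcons (ESucc (xlhd a)) V))
        (xcpair F' (xlcons (xlnth cb a) V))
        (xcpair (xlcons (xframe_evals (xcsnd cb) a) (xlcons (xframe_comp (xcfst cb)) F')) V)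
        (EIfz (xlhd a) (xcpair (xlcons (xframe_eval (xcfst cb) (xltl a)) F') V)
             (xcpair (xlcons (xframe_eval c (xlcons (EPred (xlhd a)) (xltl a)))
                   (xlcons (xframe_prec (xcsnd cb) (EPred (xlhd a)) (xltl a)) F')) V))
        (xcpair (xlcons (xframe_eval cb (xlcons (ECst 0) a)) (xlcons (xframe_mu cb (ECst 0) a) F')) V))
   (let gs := xcfst bd in let a := xcsnd bd in
      EIfz gs (xcpair F' (xlcons (ECst 0) V))
        (xcpair (xlcons (xframe_eval (xlhd gs) a) (xlcons (xframe_evals (xltl gs) a) (xlcons xframe_cons F'))) V))
   (xcpair (xlcons (xframe_eval bd (xlhd V)) F') (xltl V))
   (let g := xcfst bd in let y := xcfst (xcsnd bd) in let r := xcsnd (xcsnd bd) in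
      xcpair (xlcons (xframe_eval g (xlcons y (xlcons (xlhd V) r))) F') (xltl V))
   (let f := xcfst bd in let n := xcfst (xcsnd bd) in let a := xcsnd (xcsnd bd) in
      EIfz (xlhd V) (xcpair F' (xlcons n (xltl V)))
        (xcpair (xlcons (xframe_eval f (xlcons (ESucc n) a)) (xlcons (xframe_mu f (ESucc n) a) F')) (xltl V)))
   (xcpair F' (xlcons (xlcons (xlhd (xltl V)) (xlhd V)) (xltl (xltl V))))).

Lemma lhd_lcons : forall x l, lhd (lcons x l) = x.
Proof. intros; unfold lhd, lcons; simpl; apply cfst_pair. Qed.
Lemma ltl_lcons : forall x l, ltl (lcons x l) = l.
Proof. intros; unfold ltl, lcons; simpl; apply csnd_pair. Qed.

Lemma lhd_encode_list : forall l, lhd (encode_list l) = hd 0 l.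
Proof. destruct l; simpl. reflexivity. apply lhd_lcons. Qed.

Lemma ltl_encode_list : forall l, ltl (encode_list l) = encode_list (tl l).
Proof. destruct l; simpl. reflexivity. apply ltl_lcons. Qed.

Lemma lnth_encode_list : forall i l, lnth i (encode_list l) = nth i l 0.
Proof.
  unfold lnth. induction i; intros l.
  - simpl. rewrite lhd_encode_list. destruct l; reflexivity.
  - rewrite Nat.iter_succ_r, ltl_encode_list, IHi. destruct l; simpl; auto. destruct i; reflexivity.
Qed.

(* Keeps [cbn] from unfolding the pairing while computing the step equations. *)
Local Opaque cpair cfst csnd.

Lemma ifz_cons : forall x l a b, ifz (lcons x l) a b = b. Proof. reflexivity. Qed.
Lemma ifz_S : forall x a b, ifz (S x) a b = b. Proof. reflexivity. Qed.
Lemma ifz_0 : forall a b, ifz 0 a b = a. Proof. reflexivity. Qed.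
Lemma select6_0 : forall a0 a1 a2 a3 a4 a5, select6 0 a0 a1 a2 a3 a4 a5 = a0. Proof. reflexivity. Qed.
Lemma select6_1 : forall a0 a1 a2 a3 a4 a5, select6 1 a0 a1 a2 a3 a4 a5 = a1. Proof. reflexivity. Qed.
Lemma select6_2 : forall a0 a1 a2 a3 a4 a5, select6 2 a0 a1 a2 a3 a4 a5 = a2. Proof. reflexivity. Qed.
Lemma select6_3 : forall a0 a1 a2 a3 a4 a5, select6 3 a0 a1 a2 a3 a4 a5 = a3. Proof. reflexivity. Qed.
Lemma select6_4 : forall a0 a1 a2 a3 a4 a5, select6 4 a0 a1 a2 a3 a4 a5 = a4. Proof. reflexivity. Qed.
Lemma select6_5 : forall a0 a1 a2 a3 a4 a5, select6 5 a0 a1 a2 a3 a4 a5 = a5. Proof. reflexivity. Qed.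
Ltac machine_simpl :=
  repeat (rewrite ?cfst_pair, ?csnd_pair, ?lhd_lcons, ?ltl_lcons, ?ifz_cons, ?ifz_S, ?ifz_0,
            ?select6_0, ?select6_1, ?select6_2, ?select6_3, ?select6_4, ?select6_5;
          cbn [pred Nat.sub encode_code]).
Ltac solve_step :=
  intros; unfold machine_step, frame_eval, frame_evals, frame_comp, frame_prec, frame_mu, frame_cons;
  cbn zeta; machine_simpl; reflexivity.

Lemma step_zero : forall a K V, machine_step (cpair (lcons (frame_eval (encode_code RZero) a) K) V) =
  cpair K (lcons 0 V).
Proof. solve_step. Qed.
Lemma step_succ : forall a K V, machine_step (cpair (lcons (frame_eval (encode_code RSucc) a) K) V) =
  cpair K (lcons (S (lhd a)) V).
Proof. solve_step. Qed.
Lemma step_proj : forall i a K V, machine_step (cpair (lcons (frame_eval (encode_code (RProj i)) a) K) V) = cpair K (lcons (lnth i a) V).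
Proof. solve_step. Qed.
Lemma step_comp : forall f gs a K V, machine_step (cpair (lcons (frame_eval (encode_code (RComp f gs)) a) K) V) =
  cpair (lcons (frame_evals (encode_list (map encode_code gs)) a) (lcons (frame_comp (encode_code f)) K)) V.
Proof. solve_step. Qed.
Lemma step_prec_zero : forall f g a K V, machine_step (cpair (lcons (frame_eval (encode_code (RPrec f g)) (lcons 0 a)) K) V) =
  cpair (lcons (frame_eval (encode_code f) a) K) V.
Proof. solve_step. Qed.
Lemma step_prec_succ : forall f g y a K V, machine_step (cpair (lcons (frame_eval (encode_code (RPrec f g)) (lcons (S y) a)) K) V) =
  cpair (lcons (frame_eval (encode_code (RPrec f g)) (lcons y a)) (lcons (frame_prec (encode_code g) y a) K)) V.
Proof. solve_step. Qed.
Lemma step_mu : forall f a K V, machine_step (cpair (lcons (frame_eval (encode_code (RMu f)) a) K) V) =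
  cpair (lcons (frame_eval (encode_code f) (lcons 0 a)) (lcons (frame_mu (encode_code f) 0 a) K)) V.
Proof. solve_step. Qed.
Lemma step_evals_nil : forall a K V, machine_step (cpair (lcons (frame_evals 0 a) K) V) = cpair K (lcons 0 V).
Proof. solve_step. Qed.
Lemma step_evals_cons : forall g gs a K V, machine_step (cpair (lcons (frame_evals (lcons g gs) a) K) V) =
  cpair (lcons (frame_eval g a) (lcons (frame_evals gs a) (lcons frame_cons K))) V.
Proof. solve_step. Qed.
Lemma step_comp_return : forall f ys K V, machine_step (cpair (lcons (frame_comp f) K) (lcons ys V)) =
  cpair (lcons (frame_eval f ys) K) V.
Proof. solve_step. Qed.
Lemma step_prec_return : forall g y r rv K V, machine_step (cpair (lcons (frame_prec g y r) K) (lcons rv V)) =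
  cpair (lcons (frame_eval g (lcons y (lcons rv r))) K) V.
Proof. solve_step. Qed.
Lemma step_mu_found : forall f n a K V, machine_step (cpair (lcons (frame_mu f n a) K) (lcons 0 V)) =
  cpair K (lcons n V).
Proof. solve_step. Qed.
Lemma step_mu_next : forall f n a w K V, machine_step (cpair (lcons (frame_mu f n a) K) (lcons (S w) V)) =
  cpair (lcons (frame_eval f (lcons (S n) a)) (lcons (frame_mu f (S n) a) K)) V.
Proof. solve_step. Qed.
Lemma step_cons_return : forall ys y K V, machine_step (cpair (lcons frame_cons K) (lcons ys (lcons y V))) = cpair K (lcons (lcons y ys) V).
Proof. solve_step. Qed.
Lemma step_halted : forall V, machine_step (cpair 0 V) = cpair 0 V.
Proof. intros; unfold machine_step; cbn zeta. rewrite cfst_pair. reflexivity. Qed.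

Definition run t s := Nat.iter t machine_step s.
Definition reaches s s' := exists t, run t s = s'.

Lemma run_succ : forall t s, run (S t) s = run t (machine_step s).
Proof. intros; unfold run; apply Nat.iter_succ_r. Qed.
Lemma run_add : forall a b s, run (a + b) s = run b (run a s).
Proof.
  induction a; intros. reflexivity. change (S a + b) with (S (a + b)). rewrite !run_succ, IHa. reflexivity.
Qed.

Lemma reaches_refl : forall s, reaches s s. Proof. exists 0; reflexivity. Qed.
Lemma reaches_trans : forall s1 s2 s3, reaches s1 s2 -> reaches s2 s3 -> reaches s1 s3.
Proof. intros s1 s2 s3 [a Ha] [b Hb]. exists (a + b). rewrite run_add, Ha; auto. Qed.
Lemma reaches_step : forall s1 s2 s3, machine_step s1 = s2 -> reaches s2 s3 -> reaches s1 s3.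
Proof. intros s1 s2 s3 H [b Hb]. exists (S b). rewrite run_succ, H; auto. Qed.

Lemma reaches_mu_search : forall f a n K V,
  (forall K V, reaches (cpair (lcons (frame_eval f (lcons n a)) K) V) (cpair K (lcons 0 V))) ->
  (forall m, m < n -> exists w, forall K V, reaches (cpair (lcons (frame_eval f (lcons m a)) K) V) (cpair K (lcons (S w) V))) ->
  forall j, j <= n -> reaches (cpair (lcons (frame_eval f (lcons (n - j) a)) (lcons (frame_mu f (n - j) a) K)) V) (cpair K (lcons n V)).
Proof.
  intros f a n K V Hn Hm j. induction j; intros Hj.
  - rewrite Nat.sub_0_r. eapply reaches_trans. apply Hn. eapply reaches_step. apply step_mu_found.
    apply reaches_refl.
  - destruct (Hm (n - S j)) as [w Hw]. lia.
    eapply reaches_trans. apply Hw. eapply reaches_step. apply step_mu_next.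
    replace (S (n - S j)) with (n - j) by lia. apply IHj. lia.
Qed.

Lemma machine_reval : forall c args v, reval c args v -> forall K V,
  reaches (cpair (lcons (frame_eval (encode_code c) (encode_list args)) K) V) (cpair K (lcons v V))
with machine_revals : forall gs args ys, revals gs args ys -> forall K V,
  reaches (cpair (lcons (frame_evals (encode_list (map encode_code gs)) (encode_list args)) K) V) (cpair K (lcons (encode_list ys) V)).
Proof.
  - intros c args v H. destruct H; intros K V.
    + eapply reaches_step. apply step_zero. apply reaches_refl.
    + eapply reaches_step. apply step_succ. rewrite lhd_encode_list. apply reaches_refl.
    + eapply reaches_step. apply step_proj. rewrite lnth_encode_list. apply reaches_refl.
    + eapply reaches_step. apply step_comp. eapply reaches_trans. apply (machine_revals _ _ _ H).
      eapply reaches_step. apply step_comp_return. apply (machine_reval _ _ _ H0).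
    + simpl. eapply reaches_step. apply step_prec_zero. apply (machine_reval _ _ _ H).
    + simpl. eapply reaches_step. apply step_prec_succ. eapply reaches_trans. apply (machine_reval _ _ _ H).
      eapply reaches_step. apply step_prec_return. apply (machine_reval _ _ _ H0).
    + assert (ih : forall m, m < n -> exists w, forall K V,
        reaches (cpair (lcons (frame_eval (encode_code f) (lcons m (encode_list args))) K) V) (cpair K (lcons (S w) V))).
      { intros m hm. destruct (H0 m hm) as [w Hw]. exists w. exact (machine_reval _ _ _ Hw). }
      eapply reaches_step. apply step_mu.
      replace 0 with (n - n) at 1 2 by lia.
      apply reaches_mu_search. exact (machine_reval _ _ _ H). exact ih. lia.
  - intros gs args ys H. destruct H; intros K V.
    + simpl. eapply reaches_step. apply step_evals_nil. apply reaches_refl.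
    + simpl. eapply reaches_step. apply step_evals_cons. eapply reaches_trans. apply (machine_reval _ _ _ H).
      eapply reaches_trans. apply (machine_revals _ _ _ H0). eapply reaches_step. apply step_cons_return.
      apply reaches_refl.
Qed.

End Machine.

(** * The halting sequence [delta] *)

Section ClockedRun.
Local Open Scope nat_scope.

(* [clocked k n] pairs the state reached by running program [n] on input [n]
   for [k] steps, or until it halts, with the number of steps actually taken. *)
Definition init_state n := cpair (lcons (frame_eval n (lcons n 0)) 0) 0.
Definition clock_step z := ifz (cfst (cfst z)) z (cpair (machine_step (cfst z)) (S (csnd z))).
Definition clocked k n := Nat.iter k clock_step (cpair (init_state n) 0).
Definition halted z := cfst (cfst z) = 0.

Definition xclock_step := EIfz (xcfst (xcfst (EVar 0))) (EVar 0)
   (xcpair (xmachine_step (xcfst (EVar 0))) (ESucc (xcsnd (EVar 0)))).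
Definition xinit_clocked := xcpair (xcpair (xlcons (xframe_eval (EVar 0) (xlcons (EVar 0) (ECst 0))) (ECst 0)) (ECst 0)) (ECst 0).
Definition xclocked := EIter xclock_step (EVar 1) xinit_clocked.

Lemma expr_eval_xclocked : forall n k, expr_eval xclocked [n; k] = clocked k n.
Proof. intros; reflexivity. Qed.

Lemma wf_xclocked : expr_wf xclocked. Proof. apply call_free_wf; vm_compute; reflexivity. Qed.

Definition output_of z := lhd (csnd (cfst z)).
Definition state_num_pos z := ifz (cfst (cfst z)) (ifz (output_of z) 0 1) 0.
Definition state_num_neg z := ifz (cfst (cfst z)) (ifz (output_of z) 1 0) 0.
Definition state_den z := ifz (cfst (cfst z)) (pred (2 ^ S (csnd z))) 0.

Definition xnum_pos := EIfz (xcfst (xcfst (EVar 0))) (EIfz (xlhd (xcsnd (xcfst (EVar 0)))) (ECst 0) (ECst 1)) (ECst 0).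
Definition xnum_neg := EIfz (xcfst (xcfst (EVar 0))) (EIfz (xlhd (xcsnd (xcfst (EVar 0)))) (ECst 1) (ECst 0)) (ECst 0).
Definition xden := EIfz (xcfst (xcfst (EVar 0))) (EPred (EPow2 (ESucc (xcsnd (EVar 0))))) (ECst 0).

Lemma computable2_of_state_expr : forall E (g : nat -> nat), expr_wf E ->
  (forall z, expr_eval E [z] = g z) -> computable2 (fun n k => g (clocked k n)).
Proof.
  intros E g HE Hg. destruct (computable2_expr_comp E xclocked HE wf_xclocked) as [c Hc].
  exists c. intros n k. rewrite <- Hg, <- expr_eval_xclocked. apply Hc.
Qed.

Lemma computable2_state_num_pos : computable2 (fun n k => state_num_pos (clocked k n)).
Proof. apply (computable2_of_state_expr xnum_pos); [apply call_free_wf; vm_compute|]; reflexivity. Qed.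
Lemma computable2_state_num_neg : computable2 (fun n k => state_num_neg (clocked k n)).
Proof. apply (computable2_of_state_expr xnum_neg); [apply call_free_wf; vm_compute|]; reflexivity. Qed.
Lemma computable2_state_den : computable2 (fun n k => state_den (clocked k n)).
Proof. apply (computable2_of_state_expr xden); [apply call_free_wf; vm_compute|]; reflexivity. Qed.

Lemma clocked_succ : forall k n, clocked (S k) n = clock_step (clocked k n).
Proof. reflexivity. Qed.

Lemma clock_step_halted : forall z, halted z -> clock_step z = z.
Proof. intros z H; unfold clock_step, halted in *; rewrite H; reflexivity. Qed.

Lemma clock_step_running : forall z, ~ halted z -> clock_step z = cpair (machine_step (cfst z)) (S (csnd z)).
Proof. intros z H; unfold clock_step, halted in *. destruct (cfst (cfst z)); [congruence|reflexivity]. Qed.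

Lemma clocked_stable : forall k n, halted (clocked k n) -> forall j, clocked (j + k) n = clocked k n.
Proof. intros k n H j; induction j. reflexivity. change (S j + k) with (S (j + k)).
  rewrite clocked_succ, IHj. apply clock_step_halted; auto. Qed.

Lemma clocked_halted_le : forall k k' n, k <= k' -> halted (clocked k n) -> clocked k' n = clocked k n.
Proof. intros. replace k' with ((k' - k) + k) by lia. apply clocked_stable; auto. Qed.

Lemma clocked_running_count : forall k n, ~ halted (clocked k n) -> csnd (clocked k n) = k.
Proof.
  induction k; intros n H. simpl. unfold init_state. apply csnd_pair.
  rewrite clocked_succ in *. destruct (Nat.eq_dec (cfst (cfst (clocked k n))) 0) as [E|E].
  - rewrite clock_step_halted in H by exact E. exfalso; apply H; exact E.
  - rewrite clock_step_running in * by exact E. rewrite csnd_pair. rewrite IHk; auto.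
Qed.

Lemma clocked_count_le : forall j k n, csnd (clocked k n) <= csnd (clocked (j + k) n).
Proof.
  induction j; intros. reflexivity. change (S j + k) with (S (j + k)). rewrite clocked_succ.
  destruct (Nat.eq_dec (cfst (cfst (clocked (j + k) n))) 0) as [E|E].
  - rewrite clock_step_halted by exact E. apply IHj.
  - rewrite clock_step_running by exact E. rewrite csnd_pair. specialize (IHj k n). lia.
Qed.

Lemma run_halted : forall j V, run j (cpair 0 V) = cpair 0 V.
Proof. induction j; intros. reflexivity. rewrite run_succ, step_halted. apply IHj. Qed.

Lemma clocked_inv : forall k n, cfst (clocked k n) = run (csnd (clocked k n)) (init_state n) /\
  csnd (clocked k n) <= k /\
  (csnd (clocked k n) = k \/ halted (clocked k n)).
Proof.
  induction k; intros n.
  - simpl. rewrite cfst_pair, csnd_pair. auto.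
  - rewrite clocked_succ. destruct (IHk n) as [H1 [H2 H3]].
    destruct (Nat.eq_dec (cfst (cfst (clocked k n))) 0) as [E|E].
    + rewrite clock_step_halted by exact E. split; [exact H1|split; [lia|right; exact E]].
    + rewrite clock_step_running by exact E. rewrite cfst_pair, csnd_pair.
      destruct H3 as [H3|H3]; [|congruence]. rewrite H1, H3.
      split; [reflexivity| split; [lia| left; reflexivity]].
Qed.

Lemma clocked_of_run : forall t n w, run t (init_state n) = cpair 0 (lcons w 0) ->
  halted (clocked t n) /\ output_of (clocked t n) = w.
Proof.
  intros t n w Ht. destruct (clocked_inv t n) as [H1 [H2 H3]].
  assert (E : cfst (clocked t n) = cpair 0 (lcons w 0)).
  { destruct H3 as [H3|H3].
    - rewrite H1, H3; exact Ht.
    - rewrite H1. unfold halted in H3. rewrite H1 in H3.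
      replace t with ((csnd (clocked t n)) + (t - csnd (clocked t n))) in Ht by lia.
      rewrite run_add in Ht.
      rewrite <- (cpair_surjective (run (csnd (clocked t n)) (init_state n))) in Ht |- *.
      rewrite H3 in Ht |- *.
      rewrite run_halted in Ht. exact Ht. }
  unfold halted, output_of. rewrite E, cfst_pair, csnd_pair, lhd_lcons. auto.
Qed.

End ClockedRun.

Lemma INR_succ_pos : forall c, 0 < INR c + 1.
Proof. intros; pose proof (pos_INR c); lra. Qed.

Lemma INR_pred_pow2 : forall m, INR (pred (2 ^ S m)) + 1 = 2 ^ S m.
Proof.
  intros m. assert (H : (1 <= 2 ^ S m)%nat) by (apply Nat.le_succ_l, Nat.neq_0_lt_0, Nat.pow_nonzero; lia).
  rewrite <- S_INR. replace (S (pred (2 ^ S m))) with (2 ^ S m)%nat by lia.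
  rewrite pow_INR. replace (INR 2) with 2 by (simpl; lra). reflexivity.
Qed.

Lemma pow2_pos : forall m, 0 < 2 ^ m.
Proof. intros; apply pow_lt; lra. Qed.

Lemma inv_pow2_le : forall a b, (a <= b)%nat -> / 2 ^ b <= / 2 ^ a.
Proof.
  intros a b H. apply Rinv_le_contravar. apply pow2_pos. apply Rle_pow; auto. lra.
Qed.

Lemma inv_pow2_succ : forall N, / 2 ^ S N = / 2 * / 2 ^ N.
Proof. intros. simpl. rewrite Rinv_mult. ring. Qed.

Lemma inv_pow2_add : forall a b, / 2 ^ (a + b) = / 2 ^ a * / 2 ^ b.
Proof. intros. rewrite pow_add, Rinv_mult. reflexivity. Qed.

Lemma pow2_mul_inv : forall B, 2 ^ B * / 2 ^ B = 1.
Proof. intros. apply Rinv_r. apply Rgt_not_eq, pow2_pos. Qed.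

Lemma INR_le_pow2 : forall n, INR n <= 2 ^ n.
Proof.
  induction n. simpl; lra. rewrite S_INR. simpl. assert (1 <= 2 ^ n) by (apply pow_R1_Rle; lra). lra.
Qed.

Lemma exists_pow2_ge : forall r, exists B, r <= 2 ^ B.
Proof.
  intros r. destruct (archimed r) as [H _].
  destruct (Z_le_gt_dec (up r) 0) as [Z|Z].
  - exists 0%nat. apply IZR_le in Z. simpl. lra.
  - exists (Z.to_nat (up r)). pose proof (INR_le_pow2 (Z.to_nat (up r))).
    rewrite INR_IZR_INZ, Z2Nat.id in H0 by lia. lra.
Qed.

Lemma Rabs_le_bounds : forall x e, Rabs x <= e -> - e <= x <= e.
Proof. intros x e H. unfold Rabs in H. destruct (Rcase_abs x); lra. Qed.

Definition state_approx (z : nat) : R := rat_of (state_num_pos z) (state_num_neg z) (state_den z).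

Definition output_sign (w : nat) : R := match w with O => -1 | S _ => 1 end.

Lemma state_approx_halted : forall z, halted z ->
  state_approx z = output_sign (output_of z) / 2 ^ S (csnd z).
Proof.
  intros z H. unfold state_approx, state_num_pos, state_num_neg, state_den.
  unfold halted in H. rewrite H, !ifz_0.
  unfold rat_of. rewrite INR_pred_pow2.
  destruct (output_of z); simpl ifz; simpl output_sign; simpl INR; unfold Rdiv; ring.
Qed.

Lemma state_approx_running : forall z, ~ halted z -> state_approx z = 0.
Proof.
  intros z H. unfold state_approx, state_num_pos, state_num_neg, state_den. unfold halted in H.
  destruct (cfst (cfst z)); [congruence|]. simpl. unfold rat_of. simpl. field.
Qed.

Definition delta (n : nat) : R :=
  match excluded_middle_informative (exists k, halted (clocked k n)) with
  | left H => state_approx (clocked (proj1_sig (constructive_indefinite_description _ H)) n)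
  | right _ => 0
  end.

Lemma halted_dec : forall z, {halted z} + {~ halted z}.
Proof. intros z; unfold halted; apply Nat.eq_dec. Qed.

Lemma delta_halted : forall n k, halted (clocked k n) -> delta n = state_approx (clocked k n).
Proof.
  intros n k H. unfold delta. destruct excluded_middle_informative as [E|E]; [|exfalso; eauto].
  destruct (constructive_indefinite_description _ E) as [k' Hk']. simpl.
  destruct (Nat.le_ge_cases k k') as [L|L].
  - rewrite (clocked_halted_le k k' n L H). reflexivity.
  - rewrite (clocked_halted_le k' k n L Hk'). reflexivity.
Qed.

Lemma Rabs_output_sign_div : forall w m, Rabs (output_sign w / 2 ^ m) = / 2 ^ m.
Proof.
  intros w m. pose proof (pow2_pos m). unfold Rdiv. rewrite Rabs_mult, Rabs_inv.
  rewrite (Rabs_right (2 ^ m)) by lra.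
  destruct w; simpl; [rewrite (Rabs_left (-1)) by lra | rewrite (Rabs_right 1) by lra]; ring.
Qed.

Lemma state_approx_delta_err : forall n k, Rabs (state_approx (clocked k n) - delta n) <= / 2 ^ k.
Proof.
  intros n k. pose proof (pow2_pos k) as Pk.
  destruct (halted_dec (clocked k n)) as [H|H].
  - rewrite (delta_halted n k H). rewrite Rminus_diag, Rabs_R0. left; apply Rinv_0_lt_compat; auto.
  - rewrite state_approx_running by exact H. unfold delta. destruct excluded_middle_informative as [E|E].
    + destruct (constructive_indefinite_description _ E) as [k' Hk']. simpl.
      assert (L : (k < k')%nat).
      { destruct (Nat.lt_ge_cases k k') as [L|L]; auto. exfalso; apply H.
        rewrite (clocked_halted_le k' k n L Hk'). exact Hk'. }
      rewrite state_approx_halted by exact Hk'. rewrite Rminus_0_l, Rabs_Ropp, Rabs_output_sign_div.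
      apply inv_pow2_le.
      pose proof (clocked_count_le (k' - S k) (S k) n) as M.
      replace (k' - S k + S k)%nat with k' in M by lia.
      rewrite clocked_succ, clock_step_running in M by exact H.
      rewrite csnd_pair, clocked_running_count in M by exact H. lia.
    + rewrite Rminus_0_r, Rabs_R0. left; apply Rinv_0_lt_compat; auto.
Qed.

Lemma delta_bound : forall n, Rabs (delta n) <= / 2.
Proof.
  intros n. unfold delta. destruct excluded_middle_informative as [E|E].
  - destruct (constructive_indefinite_description _ E) as [k' Hk']. simpl.
    rewrite state_approx_halted by exact Hk'. rewrite Rabs_output_sign_div.
    replace (/2) with (/ 2 ^ 1) by (simpl; field).
    apply inv_pow2_le. lia.
  - rewrite Rabs_R0. lra.
Qed.

Lemma delta_sign_self_application : forall c f, (forall m, reval c [m] (f m)) ->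
  (f (encode_code c) = 0%nat -> delta (encode_code c) < 0) /\
  (f (encode_code c) <> 0%nat -> 0 < delta (encode_code c)).
Proof.
  intros c f Hc. set (n := encode_code c).
  destruct (machine_reval c [n] (f n) (Hc n) 0%nat 0%nat) as [t Ht].
  destruct (clocked_of_run t n (f n) Ht) as [H1 H2].
  rewrite (delta_halted n t H1), state_approx_halted by exact H1. rewrite H2.
  pose proof (Rinv_0_lt_compat _ (pow2_pos (S (csnd (clocked t n))))).
  split; intros Hw.
  - rewrite Hw. simpl output_sign. unfold Rdiv. nra.
  - destruct (f n); [congruence|]. simpl output_sign. unfold Rdiv. nra.
Qed.

Lemma delta_computable : computable_real_seq delta.
Proof.
  exists (fun n k => state_num_pos (clocked k n)), (fun n k => state_num_neg (clocked k n)),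
    (fun n k => state_den (clocked k n)), (fun n N => N).
  split; [|split; [|split; [|split]]].
  - apply computable2_state_num_pos.
  - apply computable2_state_num_neg.
  - apply computable2_state_den.
  - exists (RProj 1). intros; constructor.
  - intros n N k L. eapply Rle_trans. apply state_approx_delta_err. apply inv_pow2_le; auto.
Qed.

(** * Computable real sequences *)

Lemma rat_of_add : forall a1 b1 c1 a2 b2 c2,
  rat_of (a1 * S c2 + a2 * S c1) (b1 * S c2 + b2 * S c1) (c1 * c2 + c1 + c2) =
  rat_of a1 b1 c1 + rat_of a2 b2 c2.
Proof.
  intros. unfold rat_of. rewrite !plus_INR, !mult_INR, !S_INR.
  pose proof (pos_INR c1); pose proof (pos_INR c2). field; repeat split; nra.
Qed.

Lemma rat_of_opp : forall a b c, rat_of b a c = - rat_of a b c.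
Proof. intros; unfold rat_of. pose proof (INR_succ_pos c). field. lra. Qed.

Lemma rat_of_mul : forall a1 b1 c1 a2 b2 c2,
  rat_of (a1 * a2 + b1 * b2) (a1 * b2 + b1 * a2) (c1 * c2 + c1 + c2) =
  rat_of a1 b1 c1 * rat_of a2 b2 c2.
Proof.
  intros. unfold rat_of. rewrite !plus_INR, !mult_INR.
  pose proof (pos_INR c1); pose proof (pos_INR c2). field; repeat split; nra.
Qed.

Lemma rat_of_pos : forall a b c, 0 < rat_of a b c -> (b < a)%nat.
Proof.
  intros a b c H. unfold rat_of in H. pose proof (INR_succ_pos c).
  assert (INR b < INR a).
  { apply Rnot_le_lt; intro L. assert ((INR a - INR b) / (INR c + 1) <= 0).
    { unfold Rdiv. assert (0 < / (INR c + 1)) by (apply Rinv_0_lt_compat; lra). nra. } lra. }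
  apply INR_lt; auto.
Qed.

Lemma rat_of_inv : forall a b c, (b < a)%nat -> rat_of (S c) 0 (a - b - 1) = / rat_of a b c.
Proof.
  intros a b c H. unfold rat_of.
  assert (E : INR (a - b - 1) + 1 = INR a - INR b).
  { rewrite <- S_INR. replace (S (a - b - 1)) with (a - b)%nat by lia. rewrite minus_INR by lia. ring. }
  rewrite E. rewrite S_INR. simpl INR. pose proof (INR_succ_pos c). apply lt_INR in H.
  field. lra.
Qed.

Lemma Rdiv_le_cross : forall x y d1 d2, 0 < d1 -> 0 < d2 -> (x / d1 <= y / d2 <-> x * d2 <= y * d1).
Proof.
  intros x y d1 d2 P1 P2.
  replace (x / d1) with (x * d2 * / (d1 * d2)) by (field; lra).
  replace (y / d2) with (y * d1 * / (d1 * d2)) by (field; lra).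
  assert (P : 0 < / (d1 * d2)) by (apply Rinv_0_lt_compat; nra).
  split; intro H; [|apply Rmult_le_compat_r; lra].
  apply Rmult_le_reg_r with (/ (d1 * d2)); assumption.
Qed.

Lemma rat_of_le_iff : forall a1 b1 c1 a2 b2 c2,
  rat_of a1 b1 c1 <= rat_of a2 b2 c2 <-> (a1 * S c2 + b2 * S c1 <= a2 * S c1 + b1 * S c2)%nat.
Proof.
  intros. unfold rat_of. rewrite Rdiv_le_cross by apply INR_succ_pos.
  split; intro H.
  - apply INR_le. rewrite !plus_INR, !mult_INR, !S_INR. lra.
  - apply le_INR in H. rewrite !plus_INR, !mult_INR, !S_INR in H. lra.
Qed.

Lemma Rabs_Rmin_sub_le : forall a b x y e, Rabs (a - x) <= e -> Rabs (b - y) <= e ->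
  Rabs (Rmin a b - Rmin x y) <= e.
Proof.
  intros a b x y e H1 H2. apply Rabs_le. apply Rabs_le_bounds in H1. apply Rabs_le_bounds in H2.
  unfold Rmin. destruct (Rle_dec a b); destruct (Rle_dec x y); lra.
Qed.

Lemma computable_real_seq_rat : forall a b c, computable_real_seq (fun _ => rat_of a b c).
Proof.
  intros a b c. exists (fun _ _ => a), (fun _ _ => b), (fun _ _ => c), (fun _ _ => 0%nat).
  refine (conj _ (conj _ (conj _ (conj _ _)))); try solve [solve_computable2].
  intros. rewrite Rminus_diag, Rabs_R0. left; apply Rinv_0_lt_compat, pow2_pos.
Qed.

Lemma computable_real_seq_add : forall x y, computable_real_seq x -> computable_real_seq y ->
  computable_real_seq (fun n => x n + y n).
Proof.
  intros x y [a1 [b1 [c1 [e1 [A1 [B1 [C1 [E1 H1]]]]]]]] [a2 [b2 [c2 [e2 [A2 [B2 [C2 [E2 H2]]]]]]]].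
  exists (fun n k => a1 n k * S (c2 n k) + a2 n k * S (c1 n k))%nat,
         (fun n k => b1 n k * S (c2 n k) + b2 n k * S (c1 n k))%nat,
         (fun n k => c1 n k * c2 n k + c1 n k + c2 n k)%nat,
         (fun n N => Nat.max (e1 n (S N)) (e2 n (S N))).
  refine (conj _ (conj _ (conj _ (conj _ _)))); try solve [solve_computable2].
  - apply computable2_max; apply (computable2_comp _ (fun n _ => n) (fun _ N => S N)); solve_computable2.
  - intros n N k L. rewrite rat_of_add.
    assert (L1 : (e1 n (S N) <= k)%nat) by (eapply Nat.le_trans; [apply Nat.le_max_l|exact L]).
    assert (L2 : (e2 n (S N) <= k)%nat) by (eapply Nat.le_trans; [apply Nat.le_max_r|exact L]).
    specialize (H1 n (S N) k L1). specialize (H2 n (S N) k L2). rewrite inv_pow2_succ in H1, H2.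
    replace (rat_of (a1 n k) (b1 n k) (c1 n k) + rat_of (a2 n k) (b2 n k) (c2 n k) - (x n + y n))
      with ((rat_of (a1 n k) (b1 n k) (c1 n k) - x n) + (rat_of (a2 n k) (b2 n k) (c2 n k) - y n)) by ring.
    eapply Rle_trans. apply Rabs_triang. lra.
Qed.

Lemma computable_real_seq_opp : forall x, computable_real_seq x -> computable_real_seq (fun n => - x n).
Proof.
  intros x [a1 [b1 [c1 [e1 [A1 [B1 [C1 [E1 H1]]]]]]]].
  exists b1, a1, c1, e1. split; [|split; [|split; [|split]]]; auto.
  intros n N k L. rewrite rat_of_opp. replace (- rat_of (a1 n k) (b1 n k) (c1 n k) - - x n)
    with (- (rat_of (a1 n k) (b1 n k) (c1 n k) - x n)) by ring. rewrite Rabs_Ropp. auto.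
Qed.

Lemma Rabs_mul_sub_le : forall q1 q2 x y B N,
  Rabs x <= 2 ^ B -> Rabs y <= 2 ^ B ->
  Rabs (q1 - x) <= / 2 ^ (N + B + 2) -> Rabs (q2 - y) <= / 2 ^ (N + B + 2) ->
  Rabs (q1 * q2 - x * y) <= / 2 ^ N.
Proof.
  intros q1 q2 x y B N Bx By H1 H2.
  rewrite !inv_pow2_add in H1, H2. simpl (2 ^ 2) in H1, H2.
  set (eps := / 2 ^ N) in *. set (iB := / 2 ^ B) in *.
  assert (PB : 2 ^ B * iB = 1) by apply pow2_mul_inv.
  assert (Pe : 0 < eps) by (apply Rinv_0_lt_compat, pow2_pos).
  assert (PiB : 0 < iB) by (apply Rinv_0_lt_compat, pow2_pos).
  assert (eps <= 1) by (unfold eps; rewrite <- Rinv_1; apply Rinv_le_contravar; [lra | apply pow_R1_Rle; lra]).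
  assert (iB <= 1) by (unfold iB; rewrite <- Rinv_1; apply Rinv_le_contravar; [lra | apply pow_R1_Rle; lra]).
  pose proof (pow2_pos B).
  assert (Hq1 : Rabs q1 <= 2 ^ B + 1).
  { replace q1 with ((q1 - x) + x) by ring. eapply Rle_trans; [apply Rabs_triang|].
    assert (eps * iB * / (2 * (2 * 1)) <= 1) by nra. lra. }
  replace (q1 * q2 - x * y) with (q1 * (q2 - y) + y * (q1 - x)) by ring.
  eapply Rle_trans; [apply Rabs_triang|]. rewrite !Rabs_mult.
  assert (T1 : Rabs q1 * Rabs (q2 - y) <= (2 ^ B + 1) * (eps * iB * / (2 * (2 * 1))))
    by (apply Rmult_le_compat; auto using Rabs_pos).
  assert (T2 : Rabs y * Rabs (q1 - x) <= 2 ^ B * (eps * iB * / (2 * (2 * 1))))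
    by (apply Rmult_le_compat; auto using Rabs_pos).
  assert (E : (2 ^ B + 1) * (eps * iB * / (2 * (2 * 1))) + 2 ^ B * (eps * iB * / (2 * (2 * 1)))
              = eps * (2 * (2 ^ B * iB) + iB) / 4) by field.
  rewrite PB in E. nra.
Qed.

Lemma computable_real_seq_mul : forall x y B, (forall n, Rabs (x n) <= 2 ^ B) ->
  (forall n, Rabs (y n) <= 2 ^ B) ->
  computable_real_seq x -> computable_real_seq y -> computable_real_seq (fun n => x n * y n).
Proof.
  intros x y B Bx By [a1 [b1 [c1 [e1 [A1 [B1 [C1 [E1 H1]]]]]]]] [a2 [b2 [c2 [e2 [A2 [B2 [C2 [E2 H2]]]]]]]].
  exists (fun n k => a1 n k * a2 n k + b1 n k * b2 n k)%nat,
         (fun n k => a1 n k * b2 n k + b1 n k * a2 n k)%nat,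
         (fun n k => c1 n k * c2 n k + c1 n k + c2 n k)%nat,
         (fun n N => Nat.max (e1 n (N + B + 2)%nat) (e2 n (N + B + 2)%nat)).
  refine (conj _ (conj _ (conj _ (conj _ _)))); try solve [solve_computable2].
  - apply computable2_max; apply (computable2_comp _ (fun n _ => n) (fun _ N => N + B + 2)%nat); solve_computable2.
  - intros n N k L. rewrite rat_of_mul.
    apply Rabs_mul_sub_le with B; auto.
    + apply H1. eapply Nat.le_trans; [apply Nat.le_max_l | exact L].
    + apply H2. eapply Nat.le_trans; [apply Nat.le_max_r | exact L].
Qed.

Lemma Rabs_inv_sub_le : forall q x L N, / 2 ^ L <= x -> Rabs (q - x) <= / 2 ^ (N + L + L + 1) ->
  0 < q /\ Rabs (/ q - / x) <= / 2 ^ N.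
Proof.
  intros q x L N Lx H1.
  rewrite !inv_pow2_add in H1. simpl (2 ^ 1) in H1. rewrite Rmult_1_r in H1.
  set (eps := / 2 ^ N) in *. set (iL := / 2 ^ L) in *.
  assert (Pe : 0 < eps) by (apply Rinv_0_lt_compat, pow2_pos).
  assert (PiL : 0 < iL) by (apply Rinv_0_lt_compat, pow2_pos).
  assert (eps <= 1) by (unfold eps; rewrite <- Rinv_1; apply Rinv_le_contravar; [lra | apply pow_R1_Rle; lra]).
  assert (iL <= 1) by (unfold iL; rewrite <- Rinv_1; apply Rinv_le_contravar; [lra | apply pow_R1_Rle; lra]).
  apply Rabs_le_bounds in H1.
  assert (Hq : iL / 2 <= q) by nra.
  assert (PL : 2 ^ L * iL = 1) by apply pow2_mul_inv.
  pose proof (pow2_pos L).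
  split; [lra|].
  replace (/ q - / x) with ((x - q) / (q * x)) by (field; lra).
  unfold Rdiv. rewrite Rabs_mult, (Rabs_right (/ (q * x))) by (left; apply Rinv_0_lt_compat; nra).
  assert (Hinv : / (q * x) <= 2 ^ L * 2 ^ L * 2).
  { rewrite <- (Rinv_inv (2 ^ L * 2 ^ L * 2)). apply Rinv_le_contravar.
    - apply Rinv_0_lt_compat; nra.
    - rewrite !Rinv_mult. fold iL. nra. }
  assert (Ha : Rabs (x - q) <= eps * iL * iL * / 2) by (apply Rabs_le; lra).
  assert (H5 : Rabs (x - q) * / (q * x) <= (eps * iL * iL * / 2) * (2 ^ L * 2 ^ L * 2)).
  { apply Rmult_le_compat; auto using Rabs_pos. left; apply Rinv_0_lt_compat; nra. }
  replace ((eps * iL * iL * / 2) * (2 ^ L * 2 ^ L * 2)) with (eps * (2 ^ L * iL) * (2 ^ L * iL)) in H5 by field.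
  rewrite PL in H5. lra.
Qed.

Lemma computable_real_seq_inv : forall x L, (forall n, / 2 ^ L <= x n) ->
  computable_real_seq x -> computable_real_seq (fun n => / x n).
Proof.
  intros x L Lx [a1 [b1 [c1 [e1 [A1 [B1 [C1 [E1 H1]]]]]]]].
  exists (fun n k => S (c1 n k)), (fun _ _ => 0%nat), (fun n k => a1 n k - b1 n k - 1)%nat,
         (fun n N => e1 n (N + L + L + 1)%nat).
  refine (conj _ (conj _ (conj _ (conj _ _)))); try solve [solve_computable2].
  - apply (computable2_comp _ (fun n _ => n) (fun _ N => N + L + L + 1)%nat); solve_computable2.
  - intros n N k Lk.
    destruct (Rabs_inv_sub_le _ _ L N (Lx n) (H1 n _ k Lk)) as [Hq Herr].
    rewrite rat_of_inv by exact (rat_of_pos _ _ _ Hq). exact Herr.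
Qed.

(* [rat_le_test a1 b1 c1 a2 b2 c2] is [0] iff [rat_of a1 b1 c1 <= rat_of a2 b2 c2]. *)
Definition rat_le_test (a1 b1 c1 a2 b2 c2 : nat) : nat :=
  (a1 * S c2 + b2 * S c1) - (a2 * S c1 + b1 * S c2).

Lemma rat_of_min : forall a1 b1 c1 a2 b2 c2,
  let t := rat_le_test a1 b1 c1 a2 b2 c2 in
  rat_of (ifz t a1 a2) (ifz t b1 b2) (ifz t c1 c2) = Rmin (rat_of a1 b1 c1) (rat_of a2 b2 c2).
Proof.
  intros. unfold t, rat_le_test.
  destruct (Nat.le_gt_cases (a1 * S c2 + b2 * S c1) (a2 * S c1 + b1 * S c2)) as [G|G].
  - replace (a1 * S c2 + b2 * S c1 - (a2 * S c1 + b1 * S c2))%nat with 0%nat by lia.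
    simpl. rewrite Rmin_left; auto. apply rat_of_le_iff; auto.
  - destruct (a1 * S c2 + b2 * S c1 - (a2 * S c1 + b1 * S c2))%nat eqn:Z; [lia|].
    simpl. rewrite Rmin_right; auto.
    assert (~ rat_of a1 b1 c1 <= rat_of a2 b2 c2) by (rewrite rat_of_le_iff; lia).
    lra.
Qed.

Lemma computable_real_seq_min : forall x y, computable_real_seq x -> computable_real_seq y ->
  computable_real_seq (fun n => Rmin (x n) (y n)).
Proof.
  intros x y [a1 [b1 [c1 [e1 [A1 [B1 [C1 [E1 H1]]]]]]]] [a2 [b2 [c2 [e2 [A2 [B2 [C2 [E2 H2]]]]]]]].
  set (t := fun n k => rat_le_test (a1 n k) (b1 n k) (c1 n k) (a2 n k) (b2 n k) (c2 n k)).
  assert (Ct : computable2 t) by (unfold t, rat_le_test; solve_computable2).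
  exists (fun n k => ifz (t n k) (a1 n k) (a2 n k)), (fun n k => ifz (t n k) (b1 n k) (b2 n k)),
         (fun n k => ifz (t n k) (c1 n k) (c2 n k)), (fun n N => Nat.max (e1 n N) (e2 n N)).
  refine (conj _ (conj _ (conj _ (conj _ _)))); try solve [solve_computable2].
  intros n N k L. unfold t. rewrite rat_of_min.
  apply Rabs_Rmin_sub_le.
  - apply H1. eapply Nat.le_trans; [apply Nat.le_max_l | exact L].
  - apply H2. eapply Nat.le_trans; [apply Nat.le_max_r | exact L].
Qed.

Lemma computable_real_seq_ext : forall x y, (forall n, x n = y n) -> computable_real_seq x ->
  computable_real_seq y.
Proof.
  intros x y E [a [b [c [e [A [B [C [F H]]]]]]]]. exists a, b, c, e. repeat split; auto.
  intros n N k L. rewrite <- E. auto.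
Qed.

Lemma computable_real_seq_one : computable_real_seq (fun _ => 1).
Proof.
  apply (computable_real_seq_ext (fun _ => rat_of 1 0 0)).
  - intros; unfold rat_of; simpl; field.
  - apply computable_real_seq_rat.
Qed.

(** * Zero-rate optimal test channels for a binary source *)

Lemma ln_ge_1_sub_inv : forall z, 0 < z -> 1 - / z <= ln z.
Proof.
  intros z Hz. pose proof (exp_ineq1_le (- ln z)). rewrite exp_Ropp, exp_ln in H by auto. lra.
Qed.

Lemma ln_gt_1_sub_inv : forall z, 0 < z -> z <> 1 -> 1 - / z < ln z.
Proof.
  intros z Hz Hn. assert (- ln z <> 0).
  { intro E. apply Hn. assert (ln z = 0) by lra. rewrite <- (exp_ln z Hz), H. apply exp_0. }
  pose proof (exp_ineq1 (- ln z) H). rewrite exp_Ropp, exp_ln in H0 by auto. lra.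
Qed.

Definition mi_term (P : bool -> R) (W : bool -> bool -> R) x y :=
  if Req_EM_T (P x * W x y) 0 then 0 else P x * W x y * ln (W x y / output_dist P W y).

Lemma output_dist_ge : forall P W x y, is_dist P -> is_channel W -> P x * W x y <= output_dist P W y.
Proof.
  intros P W x y [P0 [P1 _]] HW. unfold output_dist, sum2.
  destruct (HW false) as [A [B _]]; destruct (HW true) as [C [D _]].
  destruct x, y; nra.
Qed.

Lemma output_dist_nonneg : forall P W y, is_dist P -> is_channel W -> 0 <= output_dist P W y.
Proof.
  intros P W y [P0 [P1 _]] HW. unfold output_dist, sum2.
  destruct (HW false) as [A [B _]]; destruct (HW true) as [C [D _]]. destruct y; nra.
Qed.

Lemma mutual_info_terms : forall P W, mutual_info P W =
  mi_term P W false false + mi_term P W false true + mi_term P W true false + mi_term P W true true.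
Proof. intros. unfold mutual_info, sum2, mi_term; ring_simplify; reflexivity. Qed.

Lemma mi_term_ge : forall P W x y, is_dist P -> is_channel W -> 0 < P x ->
  P x * W x y - P x * output_dist P W y <= mi_term P W x y /\
  (mi_term P W x y <= P x * W x y - P x * output_dist P W y -> W x y = output_dist P W y).
Proof.
  intros P W x y HP HW Px.
  pose proof (output_dist_ge P W x y HP HW) as Og. pose proof (output_dist_nonneg P W y HP HW) as On.
  assert (Wn : 0 <= W x y) by (destruct (HW x) as [A [B _]]; destruct y; auto).
  unfold mi_term. destruct (Req_EM_T (P x * W x y) 0) as [E|E].
  - assert (W0 : W x y = 0).
    { destruct (Rmult_integral _ _ E); auto. lra. }
    split. nra. intros H. rewrite W0 in *. assert (P x * output_dist P W y <= 0) by lra. nra.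
  - assert (Wp : 0 < W x y) by (destruct Wn as [Wn|Wn]; auto; rewrite <- Wn in E; lra).
    assert (Op : 0 < output_dist P W y) by nra.
    assert (Zp : 0 < W x y / output_dist P W y) by (apply Rdiv_lt_0_compat; auto).
    assert (Inv : / (W x y / output_dist P W y) = output_dist P W y / W x y) by (field; lra).
    assert (PWp : 0 < P x * W x y) by nra.
    split.
    + pose proof (ln_ge_1_sub_inv _ Zp) as L. rewrite Inv in L.
      assert (P x * W x y * (1 - output_dist P W y / W x y) <= P x * W x y * ln (W x y / output_dist P W y))
        by (apply Rmult_le_compat_l; lra).
      replace (P x * W x y * (1 - output_dist P W y / W x y)) with (P x * W x y - P x * output_dist P W y) in H
        by (field; lra). lra.
    + intros H. destruct (Req_dec (W x y / output_dist P W y) 1) as [Q|Q].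
      * assert (W x y = 1 * output_dist P W y) by (rewrite <- Q; field; lra). lra.
      * exfalso. pose proof (ln_gt_1_sub_inv _ Zp Q) as L. rewrite Inv in L.
        assert (P x * W x y * (1 - output_dist P W y / W x y) < P x * W x y * ln (W x y / output_dist P W y))
          by (apply Rmult_lt_compat_l; lra).
        replace (P x * W x y * (1 - output_dist P W y / W x y)) with (P x * W x y - P x * output_dist P W y) in H0
          by (field; lra). lra.
Qed.

(* The lower bounds of [mi_term_ge] add up to [0], so [mutual_info P W <= 0]
   forces equality in each of them. *)
Lemma mutual_info_nonpos_rows_eq : forall P W, is_dist P -> is_channel W -> 0 < P false -> 0 < P true ->
  mutual_info P W <= 0 -> forall y, W false y = W true y.
Proof.
  intros P W HP HW P0 P1 Hm.
  rewrite mutual_info_terms in Hm.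
  destruct (mi_term_ge P W false false HP HW P0) as [A1 B1].
  destruct (mi_term_ge P W false true HP HW P0) as [A2 B2].
  destruct (mi_term_ge P W true false HP HW P1) as [A3 B3].
  destruct (mi_term_ge P W true true HP HW P1) as [A4 B4].
  destruct HP as [_ [_ Ps]]. destruct (HW false) as [_ [_ S0]]; destruct (HW true) as [_ [_ S1]].
  assert (Osum : output_dist P W false + output_dist P W true = 1).
  { unfold output_dist, sum2.
    replace 1 with (P false * (W false false + W false true) + P true * (W true false + W true true))
      by (rewrite S0, S1; lra).
    ring. }
  assert (Tot : (P false * W false false - P false * output_dist P W false)
              + (P false * W false true - P false * output_dist P W true)
              + (P true * W true false - P true * output_dist P W false)
              + (P true * W true true - P true * output_dist P W true) = 0).
  { assert (Pt : P true = 1 - P false) by lra. unfold output_dist, sum2 in *. rewrite Pt in *.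
    assert (Wt : W false true = 1 - W false false) by lra.
    assert (Wt2 : W true true = 1 - W true false) by lra.
    rewrite Wt, Wt2. ring. }
  assert (E1 := B1 ltac:(lra)). assert (E2 := B2 ltac:(lra)).
  assert (E3 := B3 ltac:(lra)). assert (E4 := B4 ltac:(lra)).
  intros []; congruence.
Qed.

Definition bernoulli (p : R) : bool -> R := fun b => if b then p else 1 - p.
Definition const_channel (o : bool) : bool -> bool -> R := fun _ y => if Bool.eqb y o then 1 else 0.

Lemma const_channel_is_channel : forall o, is_channel (const_channel o).
Proof. intros o x. unfold is_dist, const_channel. destruct o; simpl; lra. Qed.

Lemma mi_term_zero : forall P W x y, W x y = output_dist P W y -> mi_term P W x y = 0.
Proof.
  intros P W x y H. unfold mi_term. destruct (Req_EM_T (P x * W x y) 0) as [E|E]; auto.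
  assert (W x y <> 0) by (intro Z; apply E; rewrite Z; ring).
  rewrite <- H. unfold Rdiv. rewrite Rinv_r by auto. rewrite ln_1. ring.
Qed.

Lemma mutual_info_const_channel : forall p o, mutual_info (bernoulli p) (const_channel o) = 0.
Proof.
  intros p o. rewrite mutual_info_terms. rewrite !mi_term_zero; [ring| | | |];
  unfold output_dist, sum2, const_channel, bernoulli; destruct o; simpl; ring.
Qed.

Lemma avg_distortion_const_channel : forall u v p o,
  avg_distortion (dist_matrix u v) (bernoulli p) (const_channel o) = if o then (1 - p) * u else p * v.
Proof.
  intros. unfold avg_distortion, sum2, dist_matrix, bernoulli, const_channel. destruct o; simpl; ring.
Qed.

Lemma optimal_channel_forced : forall u v p D W, 0 < u -> 0 < v -> 0 < p < 1 ->
  P_opt (dist_matrix u v) D (bernoulli p) W ->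
  (p * v < (1 - p) * u -> D = p * v -> W false false = 1) /\
  ((1 - p) * u < p * v -> D = (1 - p) * u -> W false false = 0).
Proof.
  intros u v p D W Hu Hv Hp [HW [HD Hmin]].
  assert (HP : is_dist (bernoulli p)) by (unfold is_dist, bernoulli; simpl; lra).
  assert (Rows : forall o, avg_distortion (dist_matrix u v) (bernoulli p) (const_channel o) <= D ->
     forall y, W false y = W true y).
  { intros o Ho. apply (mutual_info_nonpos_rows_eq (bernoulli p)); auto; try (unfold bernoulli; simpl; lra).
    rewrite <- (mutual_info_const_channel p o). apply Hmin; auto. apply const_channel_is_channel. }
  destruct (HW false) as [A [B S0]].
  assert (Dist : avg_distortion (dist_matrix u v) (bernoulli p) W =
    (1 - p) * W false true * u + p * W true false * v).
  { unfold avg_distortion, sum2, dist_matrix, bernoulli; simpl; ring. }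
  split; intros Hlt HDe.
  - assert (R := Rows false ltac:(rewrite avg_distortion_const_channel; lra)).
    rewrite Dist, <- (R false) in HD.
    assert (W false true * ((1 - p) * u - p * v) <= 0) by nra.
    assert (W false true <= 0) by nra. lra.
  - assert (R := Rows true ltac:(rewrite avg_distortion_const_channel; lra)).
    rewrite Dist, <- (R false) in HD.
    assert (W false false * (p * v - (1 - p) * u) <= 0) by nra.
    nra.
Qed.

(** * Undecidability of the sign of [delta] *)

Lemma threshold_half : forall A B C,
  (1 / 2 < rat_of A B C -> ifz (2 * B + C + 2 - 2 * A)%nat 1 0 = 1%nat) /\
  (rat_of A B C < 1 / 2 -> ifz (2 * B + C + 2 - 2 * A)%nat 1 0 = 0%nat).
Proof.
  intros A B C. unfold rat_of. pose proof (INR_succ_pos C) as Pc.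
  split; intros H.
  - apply Rmult_lt_compat_r with (r := INR C + 1) in H; auto.
    replace ((INR A - INR B) / (INR C + 1) * (INR C + 1)) with (INR A - INR B) in H by (field; lra).
    assert (L : (2 * B + C + 1 < 2 * A)%nat).
    { apply INR_lt. rewrite !plus_INR, !mult_INR. simpl INR. lra. }
    replace (2 * B + C + 2 - 2 * A)%nat with 0%nat by lia. reflexivity.
  - apply Rmult_lt_compat_r with (r := INR C + 1) in H; auto.
    replace ((INR A - INR B) / (INR C + 1) * (INR C + 1)) with (INR A - INR B) in H by (field; lra).
    assert (L : (2 * A < 2 * B + C + 1)%nat).
    { apply INR_lt. rewrite !plus_INR, !mult_INR. simpl INR. lra. }
    destruct (2 * B + C + 2 - 2 * A)%nat eqn:Z; [lia|reflexivity].
Qed.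

Lemma no_computable_sign_separator : forall w, computable_real_seq w ->
  ~ (forall n, (delta n < 0 -> w n = 1) /\ (0 < delta n -> w n = 0)).
Proof.
  intros w [a [b [c [e [Ca [Cb [Cc [Ce Happ]]]]]]]] Hsep.
  (* [s n] is [1] exactly when the [1/4]-approximation of [w n] lies above [1/2]. *)
  set (s := fun n => ifz (2 * b n (e n 2%nat) + c n (e n 2%nat) + 2 - 2 * a n (e n 2%nat))%nat 1%nat 0%nat).
  assert (Cs : computable2 (fun n (_ : nat) => s n)).
  { assert (Ce2 : computable2 (fun n (_ : nat) => e n 2%nat))
      by (apply (computable2_comp e (fun n _ => n) (fun _ _ => 2%nat)); solve_computable2).
    assert (Cat : forall f, computable2 f -> computable2 (fun n (_ : nat) => f n (e n 2%nat)))
      by (intros f Cf; apply (computable2_comp f (fun n _ => n) (fun n _ => e n 2%nat)); solve_computable2).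
    unfold s. apply computable2_ifz; solve_computable2; apply Cat; assumption. }
  destruct Cs as [cs Hcs].
  set (prog := RComp cs [RProj 0; RZero]).
  assert (Hprog : forall m, reval prog [m] (s m)).
  { intros m. econstructor; [apply revals_two; constructor | apply Hcs]. }
  destruct (delta_sign_self_application prog s Hprog) as [Hneg Hpos].
  set (n := encode_code prog) in Hneg, Hpos.
  pose proof (Happ n 2%nat (e n 2%nat) (le_n _)) as Hw.
  apply Rabs_le_bounds in Hw. simpl (2 ^ 2) in Hw.
  destruct (threshold_half (a n (e n 2%nat)) (b n (e n 2%nat)) (c n (e n 2%nat))) as [Habove Hbelow].
  destruct (Nat.eq_dec (s n) 0) as [Z|Z].
  - rewrite (proj1 (Hsep n) (Hneg Z)) in Hw. assert (s n = 1%nat) by (apply Habove; lra). lia.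
  - rewrite (proj2 (Hsep n) (Hpos Z)) in Hw. assert (s n = 0%nat) by (apply Hbelow; lra). lia.
Qed.

Lemma bernoulli_is_dist : forall p, 0 <= p <= 1 -> is_dist (bernoulli p).
Proof. intros p Hp. unfold is_dist, bernoulli. lra. Qed.

Section Source.

Variables d01 d10 : R.
Hypotheses (H01 : 0 < d01) (H10 : 0 < d10) (C01 : computable_real d01) (C10 : computable_real d10).

Definition source_weight n := d01 * (1 + delta n).
Definition source_prob n := source_weight n * / (source_weight n + d10).
Definition distortion_level n := Rmin (source_prob n * d10) ((1 - source_prob n) * d01).

Lemma source_weight_bounds : forall n, 0 < source_weight n <= 2 * d01.
Proof.
  intros n. destruct (Rabs_le_bounds _ _ (delta_bound n)). unfold source_weight. split; nra.
Qed.

Lemma source_prob_bounds : forall n, 0 < source_prob n < 1.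
Proof.
  intros n. destruct (source_weight_bounds n) as [Hw _]. unfold source_prob.
  assert (Hi : 0 < / (source_weight n + d10)) by (apply Rinv_0_lt_compat; lra).
  split; [nra|].
  apply (Rmult_lt_reg_r (source_weight n + d10)); [lra|].
  rewrite Rmult_assoc, Rinv_l by lra. lra.
Qed.

Lemma source_is_dist : forall n, is_dist (bernoulli (source_prob n)).
Proof. intros n. apply bernoulli_is_dist. destruct (source_prob_bounds n). lra. Qed.

Lemma one_sub_source_prob : forall n, 1 - source_prob n = d10 * / (source_weight n + d10).
Proof.
  intros n. destruct (source_weight_bounds n) as [Hw _]. unfold source_prob. field. lra.
Qed.

Lemma distortion_level_nonneg : forall n, 0 <= distortion_level n.
Proof.
  intros n. destruct (source_prob_bounds n). unfold distortion_level. apply Rmin_glb; nra.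
Qed.

Lemma source_prob_computable : computable_real_seq source_prob.
Proof.
  destruct (exists_pow2_ge (2 * d01 + / d10 + 2)) as [B HB].
  assert (Hiv : 0 < / d10) by (apply Rinv_0_lt_compat; exact H10).
  assert (H10' : / 2 ^ B <= d10).
  { rewrite <- (Rinv_inv d10). apply Rinv_le_contravar; [exact Hiv | lra]. }
  assert (Cw : computable_real_seq source_weight).
  { apply (computable_real_seq_mul (fun _ => d01) (fun n => 1 + delta n) B).
    - intros _. rewrite Rabs_right; lra.
    - intros n. destruct (Rabs_le_bounds _ _ (delta_bound n)). rewrite Rabs_right; lra.
    - exact C01.
    - apply computable_real_seq_add; [apply computable_real_seq_one | apply delta_computable]. }
  apply (computable_real_seq_mul source_weight (fun n => / (source_weight n + d10)) B).
  - intros n. destruct (source_weight_bounds n). rewrite Rabs_right; lra.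
  - intros n. destruct (source_weight_bounds n).
    rewrite Rabs_right by (left; apply Rinv_0_lt_compat; lra).
    apply Rle_trans with (/ d10); [apply Rinv_le_contravar|]; lra.
  - exact Cw.
  - apply (computable_real_seq_inv _ B).
    + intros n. destruct (source_weight_bounds n). lra.
    + apply computable_real_seq_add; [exact Cw | exact C10].
Qed.

Lemma source_dist_computable : computable_dist_seq (fun n => bernoulli (source_prob n)).
Proof.
  split; [|exact source_prob_computable].
  apply computable_real_seq_add; [apply computable_real_seq_one |].
  apply computable_real_seq_opp, source_prob_computable.
Qed.

Lemma distortion_level_computable : computable_real_seq distortion_level.
Proof.
  destruct (exists_pow2_ge (d01 + d10 + 1)) as [B HB].
  destruct source_dist_computable as [Cq Cp]. cbn [bernoulli] in Cq, Cp.
  apply computable_real_seq_min.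
  - apply (computable_real_seq_mul source_prob (fun _ => d10) B); try assumption.
    + intros n. destruct (source_prob_bounds n). rewrite Rabs_right; lra.
    + intros _. rewrite Rabs_right; lra.
  - apply (computable_real_seq_mul (fun n => 1 - source_prob n) (fun _ => d01) B); try assumption.
    + intros n. destruct (source_prob_bounds n). rewrite Rabs_right; lra.
    + intros _. rewrite Rabs_right; lra.
Qed.

Lemma optimal_channel_sign : forall n W,
  P_opt (dist_matrix d01 d10) (distortion_level n) (bernoulli (source_prob n)) W ->
  (delta n < 0 -> W false false = 1) /\ (0 < delta n -> W false false = 0).
Proof.
  intros n W Hopt.
  destruct (optimal_channel_forced d01 d10 _ _ W H01 H10 (source_prob_bounds n) Hopt) as [Hcheap0 Hcheap1].
  destruct (source_weight_bounds n) as [Hw _].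
  (* Both distortions share the positive factor [d10 / (source_weight n + d10)] *)
  set (r := d10 * / (source_weight n + d10)).
  assert (Hr : 0 < r) by (apply Rmult_lt_0_compat; [lra | apply Rinv_0_lt_compat; lra]).
  assert (E0 : source_prob n * d10 = source_weight n * r) by (unfold r, source_prob; ring).
  assert (E1 : (1 - source_prob n) * d01 = d01 * r) by (rewrite one_sub_source_prob; unfold r; ring).
  unfold distortion_level. split; intros Hd.
  - assert (source_weight n < d01) by (unfold source_weight; nra).
    apply Hcheap0; [|apply Rmin_left]; rewrite E0, E1; nra.
  - assert (d01 < source_weight n) by (unfold source_weight; nra).
    apply Hcheap1; [|apply Rmin_right]; rewrite E0, E1; nra.
Qed.

End Source.

Theorem mainTheorem7 :
  forall d01 d10 : R,
    computable_real d01 -> computable_real d10 -> 0 < d01 -> 0 < d10 ->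
    exists (P : nat -> bool -> R) (D : nat -> R),
      (forall n, is_dist (P n)) /\ computable_dist_seq P /\
      (forall n, 0 <= D n) /\ computable_real_seq D /\
      forall F : (bool -> R) -> R -> (bool -> bool -> R),
        (forall n, P_opt (dist_matrix d01 d10) (D n) (P n) (F (P n) (D n))) ->
        ~ BM_computable F.
Proof.
  intros d01 d10 C01 C10 H01 H10.
  exists (fun n => bernoulli (source_prob d01 d10 n)), (distortion_level d01 d10).
  split; [|split; [|split; [|split]]].
  - exact (source_is_dist d01 d10 H01 H10).
  - exact (source_dist_computable d01 d10 H01 H10 C01 C10).
  - exact (distortion_level_nonneg d01 d10 H01 H10).
  - exact (distortion_level_computable d01 d10 H01 H10 C01 C10).
  - intros F Hopt HBM.
    apply (no_computable_sign_separator
             (fun n => F (bernoulli (source_prob d01 d10 n)) (distortion_level d01 d10 n) false false)).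
    + apply HBM.
      * exact (source_is_dist d01 d10 H01 H10).
      * exact (source_dist_computable d01 d10 H01 H10 C01 C10).
      * exact (distortion_level_computable d01 d10 H01 H10 C01 C10).
    + intros n. exact (optimal_channel_sign d01 d10 H01 H10 n _ (Hopt n)).
Qed.
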